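(* Let $k>0$ be an integer and let $U_k$ be the random variable on $G(n,p)$ counting proper star $k$-separations. Then \[\mathbb E(U_k)=n\binom{n-1}{k}(1-p)^k\Big[\big(p+(1-p)^{k+1}\big)^{n-k-1}+\big(1-p^{n-k-1}\big)\big(1-(1-p)^{k(n-k-1)}\big)-1\Big].\]
   Context: $G(n,p)$ is the Erdős–Rényi random graph on vertex set $V$, $|V|=n$, each edge independently present with probability $p$. For a graph $\Delta$ with vertex set $W$, a separation is $S\subset W$ with $S\ne\varnothing$, $S\ne W$ and no edges between $S$ and $W\setminus S$. $\mathrm{st}(a)$ is $a$ with its neighbours. A star separation of $\Gamma$ is a pair $(a,S)$ with $a\in V$, $S\subset V\setminus\mathrm{st}(a)$, such that $S$ is a separation of the full subgraph $\Gamma\setminus\mathrm{st}(a)$; it is a star $k$-separation if $|S|=k$, and it is proper if $S$ is not a separation of $\Gamma$ itself. *)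

From mathcomp Require Import all_boot all_order all_algebra.
Set Implicit Arguments. Unset Strict Implicit. Unset Printing Implicit Defensive.
Import Order.TTheory GRing.Theory Num.Theory.

Definition pairs (n : nat) : {set {set 'I_n}} := [set e : {set 'I_n} | #|e| == 2].

(* A (simple) graph on 'I_n is an edge set E with E \subset pairs n. *)
Definition adj (n : nat) (E : {set {set 'I_n}}) (x y : 'I_n) : bool :=
  [set x; y] \in E.

Definition st (n : nat) (E : {set {set 'I_n}}) (a : 'I_n) : {set 'I_n} :=
  a |: [set y | adj E a y].

Definition is_sep (n : nat) (E : {set {set 'I_n}}) (W S : {set 'I_n}) : bool :=
  [&& S \subset W, S != set0, S != W &
      [forall x in S, forall y in W :\: S, ~~ adj E x y]].

Definition star_sep (n : nat) (E : {set {set 'I_n}}) (a : 'I_n) (S : {set 'I_n}) : bool :=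
  (S \subset ~: st E a) && is_sep E (~: st E a) S.

Definition U (n k : nat) (E : {set {set 'I_n}}) : nat :=
  #|[set aS : 'I_n * {set 'I_n} |
      [&& star_sep E aS.1 aS.2, #|aS.2| == k & ~~ is_sep E setT aS.2]]|.

Definition gnp_weight (R : ringType) (n : nat) (p : R) (E : {set {set 'I_n}}) : R :=
  (p ^+ #|E| * (1 - p) ^+ (#|pairs n| - #|E|))%R.

Definition gnp_expect (R : ringType) (n : nat) (p : R) (X : {set {set 'I_n}} -> nat) : R :=
  (\sum_(E : {set {set 'I_n}} | E \subset pairs n) gnp_weight p E * (X E)%:R)%R.

From mathcomp Require Import all_boot all_order all_algebra ring zify.
Set Implicit Arguments. Unset Strict Implicit. Unset Printing Implicit Defensive.
Import Order.TTheory GRing.Theory Num.Theory.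
Local Open Scope ring_scope.

(* Fix a and a k-set S with a \notin S, and let W be the m = n - k - 1 other
   vertices.  (a, S) is a proper star separation iff a has no neighbour in S,
   every v in W is adjacent to a or has no neighbour in S, yet neither all
   v in W are adjacent to a nor all v in W avoid S.  Both excluded events imply
   the second condition, so inclusion-exclusion writes the indicator as four
   products over W.  The edges between a and S, and for each v in W the edges
   from v to a |: S, are pairwise disjoint sets, so the factors are independent
   in G(n, p): the products have expectations (1 - p)^k times
   (p + (1 - p)^(k+1))^m, p^m, (1 - p)^(km) and (p (1 - p)^k)^m.  Summing over
   the n * C(n - 1, k) choices of (a, S) gives the formula. *)

Section RandomSubset.
Variables (R : comNzRingType) (T : finType) (p : R).

(* [Esub X F] is the expectation of [F E] for the random subset [E] of [X]
   that contains each element independently with probability [p]; thus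
   [gnp_expect p X] is [Esub p (pairs n) X] up to the cast to [R]. *)
Definition Esub (X : {set T}) (F : {set T} -> R) : R :=
  \sum_(E : {set T} | E \subset X) p ^+ #|E| * (1 - p) ^+ (#|X| - #|E|) * F E.

Definition determined_by (U : Type) (B : {set T}) (f : {set T} -> U) :=
  forall E, f E = f (E :&: B).

Lemma eq_Esub (X : {set T}) (F G : {set T} -> R) :
  {in powerset X, F =1 G} -> Esub X F = Esub X G.
Proof. by move=> eqFG; apply: eq_bigr => E XE; rewrite eqFG // powersetE. Qed.

Lemma EsubD (X : {set T}) (F G : {set T} -> R) :
  Esub X (fun E => F E + G E) = Esub X F + Esub X G.
Proof. by rewrite /Esub -big_split; apply: eq_bigr => E _; rewrite mulrDr. Qed.

Lemma EsubB (X : {set T}) (F G : {set T} -> R) :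
  Esub X (fun E => F E - G E) = Esub X F - Esub X G.
Proof. by rewrite /Esub -sumrB; apply: eq_bigr => E _; rewrite mulrBr. Qed.

Lemma Esub_mull (X : {set T}) c (F : {set T} -> R) :
  Esub X (fun E => c * F E) = c * Esub X F.
Proof. by rewrite /Esub mulr_sumr; apply: eq_bigr => E _; rewrite mulrCA. Qed.

Lemma Esub_mulr (X : {set T}) c (F : {set T} -> R) :
  Esub X (fun E => F E * c) = Esub X F * c.
Proof. by rewrite /Esub mulr_suml; apply: eq_bigr => E _; rewrite mulrA. Qed.

Lemma Esub_sum (I : finType) (X : {set T}) (F : I -> {set T} -> R) :
  Esub X (fun E => \sum_i F i E) = \sum_i Esub X (F i).
Proof. by rewrite /Esub exchange_big; apply: eq_bigr => E _; rewrite mulr_sumr. Qed.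

Lemma Esub_set0 (F : {set T} -> R) : Esub set0 F = F set0.
Proof.
rewrite /Esub (big_pred1 set0) => [|E]; last by rewrite subset0.
by rewrite cards0 !expr0 !mul1r.
Qed.

Lemma Esub_set1 x (F : {set T} -> R) :
  Esub [set x] F = p * F [set x] + (1 - p) * F set0.
Proof.
rewrite /Esub (eq_bigl (fun E => E \in powerset [set x])) => [|E]; last first.
  by rewrite powersetE.
rewrite powerset1 big_setU1 ?big_set1 /=; last first.
  by rewrite in_set1 eq_sym; apply/eqP => /setP /(_ x); rewrite !inE eqxx.
by rewrite cards1 cards0 subnn subn0 !expr0 expr1 !mulr1 mul1r addrC.
Qed.

Lemma setUI_disjoint (Y Z E1 E2 : {set T}) : [disjoint Y & Z] ->
  E1 \subset Y -> E2 \subset Z -> (E1 :|: E2) :&: Y = E1 /\ (E1 :|: E2) :&: Z = E2.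
Proof.
move=> YZ E1Y E2Z; rewrite !setIUl (setIidPl E1Y) (setIidPl E2Z).
rewrite (disjoint_setI0 (disjointW E2Z (subxx Y) _)) 1?disjoint_sym //.
by rewrite (disjoint_setI0 (disjointW E1Y (subxx Z) _)) // setU0 set0U.
Qed.

Lemma cardsU_disjoint (A B : {set T}) : [disjoint A & B] -> #|A :|: B| = (#|A| + #|B|)%N.
Proof. by move=> AB; rewrite cardsU (disjoint_setI0 AB) cards0 subn0. Qed.

Lemma Esub_split (Y Z : {set T}) (F : {set T} -> R) : [disjoint Y & Z] ->
  Esub (Y :|: Z) F = Esub Y (fun E1 => Esub Z (fun E2 => F (E1 :|: E2))).
Proof.
move=> YZ; rewrite /Esub; under [RHS]eq_bigr do rewrite big_distrr.
rewrite pair_big_dep /= (reindex_onto (fun E12 => E12.1 :|: E12.2)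
  (fun E => (E :&: Y, E :&: Z))) => [|E XE]; last by rewrite -setIUr; apply/setIidPl.
apply: eq_big => [[E1 E2]|[E1 E2] /andP[_ /eqP[eq1 eq2]]] /=.
  apply/andP/andP => [[_ /eqP[<- <-]]|[E1Y E2Z]]; first by rewrite !subsetIr.
  by have [-> ->] := setUI_disjoint YZ E1Y E2Z; rewrite setUSS.
have E1Y : E1 \subset Y by rewrite -eq1 subsetIr.
have E2Z : E2 \subset Z by rewrite -eq2 subsetIr.
rewrite !cardsU_disjoint ?(disjointW E1Y E2Z) //.
have [leY leZ] := (subset_leq_card E1Y, subset_leq_card E2Z).
have -> : (#|Y| + #|Z| - (#|E1| + #|E2|) = (#|Y| - #|E1|) + (#|Z| - #|E2|))%N.
  by move: leY leZ; move: #|Y| #|Z| #|E1| #|E2| => y z e1 e2; lia.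
by rewrite !exprD mulrACA -!mulrA.
Qed.

Lemma Esub_const (X : {set T}) c : Esub X (fun _ => c) = c.
Proof.
elim: {X}#|X| {-2}X (erefl #|X|) => [|m IHm] X cardX.
  by rewrite (cards0_eq cardX) Esub_set0.
have /card_gt0P[x Xx] : (0 < #|X|)%N by rewrite cardX.
rewrite -(setD1K Xx) Esub_split; last by rewrite disjoints1 setD11.
rewrite (eq_Esub (G := fun _ => c)) => [|E _]; last first.
  by apply: IHm; move: cardX; rewrite (cardsD1 x X) Xx => -[].
by rewrite Esub_set1 -mulrDl subrKC mul1r.
Qed.

Lemma determined_by_subset (U : Type) (B D : {set T}) (f : {set T} -> U) :
  B \subset D -> determined_by B f -> determined_by D f.
Proof. by move=> BD fB E; rewrite fB [RHS]fB -setIA (setIidPr BD). Qed.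

Lemma Esub_mul (Y Z : {set T}) (G H : {set T} -> R) : [disjoint Y & Z] ->
  determined_by Y G -> determined_by Z H ->
  Esub (Y :|: Z) (fun E => G E * H E) = Esub Y G * Esub Z H.
Proof.
move=> YZ GY HZ; rewrite Esub_split // -Esub_mulr.
apply: eq_Esub => E1; rewrite powersetE => E1Y; rewrite -Esub_mull.
apply: eq_Esub => E2; rewrite powersetE => E2Z.
by have [eq1 eq2] := setUI_disjoint YZ E1Y E2Z; rewrite GY HZ eq1 eq2.
Qed.

Lemma Esub_restrict (X Y : {set T}) (F : {set T} -> R) :
  Y \subset X -> determined_by Y F -> Esub X F = Esub Y F.
Proof.
move=> YX FY; have /subsetDP[_ XYY] := subxx (X :\: Y).
rewrite -(setID X Y) (setIidPr YX) (eq_Esub (G := fun E => F E * 1)) => [|E _].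
  by rewrite Esub_mul ?Esub_const ?mulr1 // disjoint_sym.
by rewrite mulr1.
Qed.

Lemma determined_by_prod (I : finType) (A : {set I}) (B : I -> {set T})
    (f : I -> {set T} -> R) :
  (forall i, determined_by (B i) (f i)) ->
  determined_by (\bigcup_(i in A) B i) (fun E => \prod_(i in A) f i E).
Proof.
move=> fB E; apply: eq_bigr => i Ai.
exact: determined_by_subset (bigcup_sup _ Ai) (fB i) E.
Qed.

Lemma Esub_prod (I : finType) (A : {set I}) (B : I -> {set T})
    (f : I -> {set T} -> R) :
  {in A &, forall i j, i != j -> [disjoint B i & B j]} ->
  (forall i, determined_by (B i) (f i)) ->
  Esub (\bigcup_(i in A) B i) (fun E => \prod_(i in A) f i E)
  = \prod_(i in A) Esub (B i) (f i).
Proof.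
move=> Bdisj fB; elim: {A}#|A| {-2}A (erefl #|A|) Bdisj => [|m IHm] A cardA Bdisj.
  rewrite (cards0_eq cardA) big_set0 big_set0 (eq_Esub (G := fun _ => 1)) ?Esub_const //.
  by move=> E _; rewrite big_set0.
have /card_gt0P[x Ax] : (0 < #|A|)%N by rewrite cardA.
rewrite (big_setD1 x Ax) (big_setD1 x Ax) (@eq_Esub _ _
  (fun E => f x E * \prod_(i in A :\ x) f i E)) => [|E _]; last by rewrite (big_setD1 x Ax).
rewrite Esub_mul; [|apply: bigcup_disjoint|exact: fB|exact: determined_by_prod].
  rewrite IHm => [//||i j]; first by move: cardA; rewrite (cardsD1 x A) Ax => -[].
  by rewrite !inE => /andP[_ Ai] /andP[_ Aj]; apply: Bdisj.
move=> i; rewrite !inE => /andP[ix Ai].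
by apply: Bdisj; rewrite // eq_sym.
Qed.

Lemma determined_by_natr (B : {set T}) (b : {set T} -> bool) :
  determined_by B b -> determined_by B (fun E => (b E)%:R : R).
Proof. by move=> bB E; rewrite bB. Qed.

Lemma determined_by_mem (B : {set T}) x : x \in B -> determined_by B (fun E => x \in E).
Proof. by move=> Bx E; rewrite in_setI Bx andbT. Qed.

Lemma natr_forall (I : finType) (A : {pred I}) (P : pred I) :
  ([forall i in A, P i]%:R : R) = \prod_(i in A) (P i)%:R.
Proof.
case: (boolP [forall i in A, P i]) => [/forall_inP allP|/forall_inPn[i Ai nPi]].
  by rewrite big1 // => i /allP ->.
by rewrite (bigD1 i) //= (negbTE nPi) mul0r.
Qed.

Lemma Esub_mem1 x : Esub [set x] (fun E => (x \in E)%:R) = p.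
Proof. by rewrite Esub_set1 set11 inE mulr1 mulr0 addr0. Qed.

Lemma Esub_notin1 x : Esub [set x] (fun E => (x \notin E)%:R) = 1 - p.
Proof. by rewrite Esub_set1 set11 inE mulr0 mulr1 add0r. Qed.

Lemma Esub_forall_notin (I : finType) (A : {set I}) (e : I -> T) : {in A &, injective e} ->
  Esub (\bigcup_(i in A) [set e i]) (fun E => [forall i in A, e i \notin E]%:R)
  = (1 - p) ^+ #|A|.
Proof.
move=> e_inj; rewrite (eq_Esub (G := fun E => \prod_(i in A) (e i \notin E)%:R));
  last by move=> E _; apply: natr_forall.
rewrite Esub_prod => [|i j Ai Aj|i E]; last by rewrite (determined_by_mem (set11 (e i))).
  by rewrite (eq_bigr (fun _ => 1 - p)) ?prodr_const // => i _; apply: Esub_notin1.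
by rewrite disjoints1 inE; apply: contra => /eqP/e_inj->.
Qed.
End RandomSubset.

Lemma adjC n (E : {set {set 'I_n}}) x y : adj E x y = adj E y x.
Proof. by rewrite /adj setUC. Qed.

Section StarSeparationEvents.
Variables (n : nat) (a : 'I_n) (S : {set 'I_n}) (E : {set {set 'I_n}}).
Hypotheses (aS : a \notin S) (S0 : S != set0).

Definition outside : {set 'I_n} := ~: (a |: S).

Definition cut_from_S (v : 'I_n) := [forall s in S, ~~ adj E s v].

Lemma in_outside v : (v \in outside) = (v != a) && (v \notin S).
Proof. by rewrite !inE negb_or. Qed.

Lemma in_st v : (v \in st E a) = (v == a) || adj E a v.
Proof. by rewrite !inE. Qed.

Lemma neq_a_S s : s \in S -> s != a.
Proof. by move=> Ss; apply: contraNneq aS => <-. Qed.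

Lemma S_sub_compl_st :
  (S \subset ~: st E a) = [forall s in S, ~~ adj E a s].
Proof.
apply/subsetP/forall_inP => SnotE s Ss.
  by move: (SnotE s Ss); rewrite inE in_st negb_or => /andP[].
by rewrite inE in_st negb_or neq_a_S ?SnotE.
Qed.

Section NoEdgeFromA.
Hypothesis noaS : [forall s in S, ~~ adj E a s].

Lemma S_neq_compl_st :
  (S != ~: st E a) = ~~ [forall v in outside, adj E a v].
Proof.
congr negb; apply/eqP/forall_inP => [SE v|aout].
  rewrite in_outside => /andP[va vS]; apply: contraNT vS => nav.
  by rewrite SE inE in_st negb_or va.
apply/setP => v; rewrite inE in_st; case Sv: (v \in S).
  by rewrite (negbTE (neq_a_S Sv)) (forall_inP noaS).
by case: eqP => [//|/eqP va]; rewrite aout // in_outside va Sv.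
Qed.

Lemma is_sep_setTE : is_sep E setT S = [forall v in outside, cut_from_S v].
Proof.
have ST : S != setT by apply: contraNneq aS => ->; rewrite inE.
rewrite /is_sep subsetT S0 ST /=; apply/forall_inP/forall_inP => [sepS v|cutS s Ss].
  rewrite in_outside => /andP[_ vS]; apply/forall_inP => s Ss.
  by move/forall_inP: (sepS s Ss); apply; rewrite !inE vS.
apply/forall_inP => v; rewrite !inE andbT => vS.
have [->|va] := eqVneq v a; first by rewrite adjC (forall_inP noaS).
have : v \in outside by rewrite in_outside va.
by move=> /cutS /forall_inP; apply.
Qed.

End NoEdgeFromA.

Lemma sep_compl_stE :
  [forall x in S, forall y in ~: st E a :\: S, ~~ adj E x y]
  = [forall v in outside, adj E a v || cut_from_S v].
Proof.
apply/forall_inP/forall_inP => [sepS v|cutS s Ss].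
  rewrite in_outside => /andP[va vS]; case: (boolP (adj E a v)) => //= nav.
  apply/forall_inP => s Ss; move/forall_inP: (sepS s Ss); apply.
  by rewrite !inE negb_or vS va.
apply/forall_inP => v; rewrite !inE negb_or => /andP[vS /andP[va nav]].
have := cutS v; rewrite in_outside va vS (negbTE nav) => /(_ isT) cut_v.
exact: (forall_inP cut_v).
Qed.

Lemma proper_star_sepE :
  star_sep E a S && ~~ is_sep E setT S =
  [&& [forall s in S, ~~ adj E a s],
      [forall v in outside, adj E a v || cut_from_S v],
      ~~ [forall v in outside, adj E a v] &
      ~~ [forall v in outside, cut_from_S v]].
Proof.
rewrite /star_sep S_sub_compl_st; case: (boolP [forall s in _, _]) => //= noaS.
rewrite is_sep_setTE // /is_sep S_sub_compl_st noaS S0 S_neq_compl_st // sep_compl_stE.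
by case: [forall v in _, _ || _]; case: [forall v in _, adj E a v].
Qed.

End StarSeparationEvents.

Lemma set2_eq_meml (T : finType) (x y z w : T) :
  [set x; y] = [set z; w] -> (x == z) || (x == w).
Proof. by move/setP/(_ x); rewrite !inE eqxx. Qed.

Lemma set2_eq_memr (T : finType) (x y z w : T) :
  [set x; y] = [set z; w] -> (y == z) || (y == w).
Proof. by rewrite [[set x; y]]setUC; apply: set2_eq_meml. Qed.

Lemma natr_inclusion_exclusion (R : comNzRingType) (b x y z : bool) :
  (y ==> x) -> (z ==> x) ->
  ([&& b, x, ~~ y & ~~ z]%:R : R) = b%:R * (x%:R - y%:R - z%:R + y%:R * z%:R).
Proof. by case: b; case: x; case: y; case: z => //= _ _; rewrite ?mulr0n ?mulr1n; ring. Qed.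

Definition star_sep_prob (R : pzRingType) (p : R) (k m : nat) : R :=
  (1 - p) ^+ k * ((p + (1 - p) ^+ k.+1) ^+ m - p ^+ m
                  - ((1 - p) ^+ k) ^+ m + (p * (1 - p) ^+ k) ^+ m).

Section ProperStarSeparationProbability.
Variables (R : comNzRingType) (p : R) (n : nat) (a : 'I_n) (S : {set 'I_n}).
Hypotheses (aS : a \notin S) (S0 : S != set0).

Local Notation outside := (outside a S).
Local Notation cut_from_S := (cut_from_S S).

Definition edges_aS : {set {set 'I_n}} := \bigcup_(s in S) [set [set a; s]].
Definition edges_S (v : 'I_n) : {set {set 'I_n}} := \bigcup_(s in S) [set [set s; v]].
Definition block (v : 'I_n) : {set {set 'I_n}} := [set [set a; v]] :|: edges_S v.
Definition blocks : {set {set 'I_n}} := \bigcup_(v in outside) block v.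

Lemma mem_block v e : e \in block v -> exists2 c, c \in a |: S & e = [set c; v].
Proof.
rewrite !inE => /orP[/eqP->|/bigcupP[s Ss]]; first by exists a; rewrite ?setU11.
by rewrite inE => /eqP->; exists s; rewrite // setU1r.
Qed.

Lemma neq_outside c v : c \in a |: S -> v \in outside -> c != v.
Proof. by move=> ac; apply: contraTneq => <-; rewrite inE ac. Qed.

Lemma disjoint_blocks : {in outside &, forall v w, v != w -> [disjoint block v & block w]}.
Proof.
move=> v w vout wout vw; rewrite disjoints_subset; apply/subsetP => e.
move=> /mem_block[c ac ->]; rewrite inE; apply/negP => /mem_block[d ad].
move/set2_eq_memr; rewrite (negbTE vw) orbF eq_sym => /eqP dv.
by move: (neq_outside ad vout); rewrite dv eqxx.
Qed.

Lemma disjoint_edges_aS_blocks : [disjoint edges_aS & blocks].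
Proof.
apply: bigcup_disjoint => v; rewrite in_outside => /andP[va vS].
rewrite disjoints_subset; apply/subsetP => e /bigcupP[s Ss] /set1P->.
rewrite in_setC; apply/negP => /mem_block[c _] /esym/set2_eq_memr/orP[]/eqP vE.
  by rewrite vE eqxx in va.
by rewrite vE Ss in vS.
Qed.

Lemma edges_sub_pairs : edges_aS :|: blocks \subset pairs n.
Proof.
apply/subsetP => e /setUP[/bigcupP[s Ss] /set1P->|/bigcupP[v vout] /mem_block[c ac ->]].
  by rewrite inE cards2 (eq_sym a) (neq_a_S aS Ss).
by rewrite inE cards2 neq_outside.
Qed.

Lemma edge_in_edges_aS s : s \in S -> [set a; s] \in edges_aS.
Proof. by move=> Ss; apply/bigcupP; exists s; rewrite ?set11. Qed.

Lemma edge_in_edges_S s v : s \in S -> [set s; v] \in edges_S v.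
Proof. by move=> Ss; apply/bigcupP; exists s; rewrite ?set11. Qed.

Lemma determined_no_edge_aS :
  determined_by edges_aS (fun E => [forall s in S, ~~ adj E a s]).
Proof.
move=> E; apply: eq_forallb_in => s Ss.
by rewrite /adj (determined_by_mem (edge_in_edges_aS Ss)).
Qed.

Lemma determined_cut v : determined_by (edges_S v) (fun E => cut_from_S E v).
Proof.
move=> E; apply: eq_forallb_in => s Ss.
by rewrite /adj (determined_by_mem (edge_in_edges_S v Ss)).
Qed.

Lemma determined_adj v : determined_by [set [set a; v]] (fun E => adj E a v).
Proof. exact/determined_by_mem/set11. Qed.

Lemma Esub_cut v : v \notin S ->
  Esub p (edges_S v) (fun E => (cut_from_S E v)%:R) = (1 - p) ^+ #|S|.
Proof.
move=> vS; apply: Esub_forall_notin => s s' Ss _ /set2_eq_meml/orP[/eqP//|/eqP sv].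
by rewrite -sv Ss in vS.
Qed.

Lemma Esub_no_edge_aS :
  Esub p edges_aS (fun E => [forall s in S, ~~ adj E a s]%:R) = (1 - p) ^+ #|S|.
Proof.
apply: Esub_forall_notin => s s' Ss _ /set2_eq_memr/orP[/eqP sa|/eqP//].
by move: (neq_a_S aS Ss); rewrite sa eqxx.
Qed.

Lemma disjoint_edge_av_edges_S v : v \in outside -> [disjoint [set [set a; v]] & edges_S v].
Proof.
rewrite in_outside disjoints1 => /andP[va _]; apply/negP => /bigcupP[s Ss] /set1P.
move/set2_eq_meml/orP => -[]/eqP aE; first by move: aS; rewrite aE Ss.
by rewrite aE eqxx in va.
Qed.

Lemma edge_av_in_block v : [set a; v] \in block v.
Proof. by rewrite !inE eqxx. Qed.

Lemma determined_block v (h : bool -> bool -> R) :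
  determined_by (block v) (fun E => h (adj E a v) (cut_from_S E v)).
Proof.
have cutE : determined_by (block v) (fun E => cut_from_S E v).
  exact: determined_by_subset (subsetUr _ _) (determined_cut v).
by move=> E; rewrite cutE /adj (determined_by_mem (edge_av_in_block v) E).
Qed.

Lemma Esub_block_adj v : Esub p (block v) (fun E => (adj E a v)%:R) = p.
Proof.
rewrite (@Esub_restrict _ _ _ _ [set [set a; v]]) ?subsetUl ?Esub_mem1 //.
exact/determined_by_natr/determined_adj.
Qed.

Lemma Esub_block_cut v : v \in outside ->
  Esub p (block v) (fun E => (cut_from_S E v)%:R) = (1 - p) ^+ #|S|.
Proof.
rewrite in_outside => /andP[_ vS].
rewrite (@Esub_restrict _ _ _ _ (edges_S v)) ?subsetUr ?Esub_cut //.
exact/determined_by_natr/determined_cut.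
Qed.

Lemma Esub_block_adj_cut v : v \in outside ->
  Esub p (block v) (fun E => (adj E a v)%:R * (cut_from_S E v)%:R)
  = p * (1 - p) ^+ #|S|.
Proof.
move=> vout; have vS : v \notin S by move: vout; rewrite in_outside => /andP[].
rewrite Esub_mul ?disjoint_edge_av_edges_S ?Esub_mem1 ?Esub_cut //.
- exact/determined_by_natr/determined_adj.
- exact/determined_by_natr/determined_cut.
Qed.

Lemma Esub_block_adj_or_cut v : v \in outside ->
  Esub p (block v) (fun E => (adj E a v || cut_from_S E v)%:R)
  = p + (1 - p) ^+ #|S|.+1.
Proof.
move=> vout; have vS : v \notin S by move: vout; rewrite in_outside => /andP[].
rewrite (eq_Esub p (G := fun E =>
  (adj E a v)%:R + (~~ adj E a v)%:R * (cut_from_S E v)%:R)); last first.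
  move=> E _; case: (adj E a v); case: (cut_from_S E v);
  by rewrite /= ?mulr0n ?mulr1n; ring.
rewrite EsubD Esub_block_adj Esub_mul ?disjoint_edge_av_edges_S ?Esub_notin1 ?Esub_cut //.
- by rewrite exprS.
- by move=> E; rewrite /adj (determined_by_mem (set11 [set a; v])).
- exact/determined_by_natr/determined_cut.
Qed.

Lemma Esub_blocks (f : 'I_n -> {set {set 'I_n}} -> R) c :
  (forall v, determined_by (block v) (f v)) ->
  {in outside, forall v, Esub p (block v) (f v) = c} ->
  Esub p blocks (fun E => \prod_(v in outside) f v E) = c ^+ #|outside|.
Proof.
move=> fblock Ef; rewrite Esub_prod //; last exact: disjoint_blocks.
by rewrite (eq_bigr (fun _ => c)) ?prodr_const // => v /Ef.
Qed.

Lemma Esub_no_edge_aS_blocks (f : 'I_n -> {set {set 'I_n}} -> R) c :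
  (forall v, determined_by (block v) (f v)) ->
  {in outside, forall v, Esub p (block v) (f v) = c} ->
  Esub p (pairs n) (fun E => [forall s in S, ~~ adj E a s]%:R * \prod_(v in outside) f v E)
  = (1 - p) ^+ #|S| * c ^+ #|outside|.
Proof.
move=> fblock Ef.
have noE := determined_by_natr R determined_no_edge_aS.
have prodE := determined_by_prod outside fblock.
rewrite (@Esub_restrict _ _ _ _ (edges_aS :|: blocks)) ?edges_sub_pairs //.
  by rewrite Esub_mul ?disjoint_edges_aS_blocks ?Esub_no_edge_aS ?(Esub_blocks fblock Ef).
move=> E; rewrite (determined_by_subset (subsetUl edges_aS blocks) noE E).
by rewrite (determined_by_subset (subsetUr edges_aS blocks) prodE E).
Qed.

Lemma Esub_proper_star_sep :
  Esub p (pairs n) (fun E => (star_sep E a S && ~~ is_sep E setT S)%:R) =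
  star_sep_prob p #|S| #|outside|.
Proof.
rewrite (eq_Esub p (G := fun E =>
    [forall s in S, ~~ adj E a s]%:R *
      \prod_(v in outside) (adj E a v || cut_from_S E v)%:R
  - [forall s in S, ~~ adj E a s]%:R * \prod_(v in outside) (adj E a v)%:R
  - [forall s in S, ~~ adj E a s]%:R * \prod_(v in outside) (cut_from_S E v)%:R
  + [forall s in S, ~~ adj E a s]%:R *
      \prod_(v in outside) ((adj E a v)%:R * (cut_from_S E v)%:R))); last first.
  move=> E _; rewrite proper_star_sepE // natr_inclusion_exclusion.
  - by rewrite -!mulrBr -mulrDr big_split /= !natr_forall.
  - by apply/implyP => /forall_inP adj_all; apply/forall_inP => v /adj_all ->.
  - by apply/implyP => /forall_inP cut_all; apply/forall_inP => v /cut_all ->; rewrite orbT.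
rewrite EsubD !EsubB.
rewrite (Esub_no_edge_aS_blocks (fun v => determined_block v (fun x y => (x || y)%:R))
  Esub_block_adj_or_cut).
rewrite (Esub_no_edge_aS_blocks (fun v => determined_block v (fun x _ => x%:R))
  (fun v _ => Esub_block_adj v)).
rewrite (Esub_no_edge_aS_blocks (fun v => determined_block v (fun _ y => y%:R))
  Esub_block_cut).
rewrite (Esub_no_edge_aS_blocks (fun v => determined_block v (fun x y => x%:R * y%:R))
  Esub_block_adj_cut).
by rewrite -!mulrBr -mulrDr.
Qed.

End ProperStarSeparationProbability.

Lemma star_sep_notin n (E : {set {set 'I_n}}) a (S : {set 'I_n}) :
  star_sep E a S -> a \notin S.
Proof. by case/andP => /subsetP sub _; apply/negP => /sub; rewrite !inE eqxx. Qed.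

Lemma card_outside n (a : 'I_n) (S : {set 'I_n}) :
  a \notin S -> #|outside a S| = (n - #|S|.+1)%N.
Proof. by move=> aS; rewrite cardsCs setCK cardsU1 aS card_ord. Qed.

Lemma Esub_proper_star_k_sep (R : comNzRingType) (p : R) n k (a : 'I_n) (S : {set 'I_n}) :
  (0 < k)%N ->
  Esub p (pairs n) (fun E => [&& star_sep E a S, #|S| == k & ~~ is_sep E setT S]%:R)
  = ((a \notin S) && (#|S| == k))%:R * star_sep_prob p k (n - k.+1).
Proof.
move=> k_gt0; have [aS|aS] /= := boolP (a \in S).
  rewrite mul0r (eq_Esub p (G := fun _ => 0)) ?Esub_const // => E _.
  by case: (boolP (star_sep E a S)) => // /star_sep_notin; rewrite aS.
have [cardS|] := eqVneq #|S| k; last first.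
  move=> neq_k; rewrite mul0r (eq_Esub p (G := fun _ => 0)) ?Esub_const // => E _.
  by rewrite andbF.
have S0 : S != set0 by apply: contraTneq k_gt0 => S0; rewrite -cardS S0 cards0.
by rewrite mul1r -cardS -(card_outside aS) -Esub_proper_star_sep.
Qed.

Lemma sum_notin_card_eq n k :
  (\sum_(aS : 'I_n * {set 'I_n}) ((aS.1 \notin aS.2) && (#|aS.2| == k))
   = n * 'C(n.-1, k))%N.
Proof.
rewrite -(pair_big xpredT xpredT
  (fun (a : 'I_n) (S : {set 'I_n}) => ((a \notin S) && (#|S| == k) : nat))) /=.
rewrite (eq_bigr (fun _ => 'C(n.-1, k))) => [|a _]; first by rewrite sum_nat_const card_ord.
rewrite -big_mkcond /= sum1_card.
rewrite (eq_card (B := [set S : {set 'I_n} | S \subset [set~ a] & #|S| == k])).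
  by rewrite cards_draws cardsC1 card_ord.
move=> S; rewrite !inE; congr (_ && _).
apply/idP/subsetP => [aS x xS|sub]; first by rewrite !inE; apply: contraNneq aS => <-.
by apply/negP => /sub; rewrite !inE eqxx.
Qed.

Theorem lemma3p2 (R : realFieldType) (n k : nat) (p : R)
    (hp0 : 0 <= p) (hp1 : p <= 1) (hk : (0 < k)%N) :
  gnp_expect p (U k (n:=n)) =
  n%:R * ('C(n.-1, k))%:R * (1 - p) ^+ k *
    ((p + (1 - p) ^+ k.+1) ^+ (n - k.+1)
     + (1 - p ^+ (n - k.+1)) * (1 - (1 - p) ^+ (k * (n - k.+1))) - 1).
Proof.
have -> : gnp_expect p (U k (n:=n)) = Esub p (pairs n) (fun E => (U k E)%:R) by [].
rewrite (eq_Esub p (G := fun E => \sum_(aS : 'I_n * {set 'I_n})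
   [&& star_sep E aS.1 aS.2, #|aS.2| == k & ~~ is_sep E setT aS.2]%:R)); last first.
  move=> E _; rewrite /U -sum1_card big_mkcond natr_sum.
  by apply: eq_bigr => aS _; rewrite inE.
rewrite Esub_sum (eq_bigr _ (fun aS _ => Esub_proper_star_k_sep p aS.1 aS.2 hk)).
rewrite -mulr_suml -natr_sum sum_notin_card_eq natrM /star_sep_prob exprM exprMn.
by rewrite -[_.+1]addn1 exprD expr1; ring.
Qed.
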